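(* For all $n\ge1$, $k\ge1$ and every $\pi\in\mathbf{C}(n,k)$, the list $\mathcal{C}(\pi)$ contains every element of $\mathbf{C}(n,k)$ exactly once (so it has length $k^n n!$), each entry after the first is obtained from the preceding entry by a flip, and the first entry is obtained from the last entry by a flip of length $n$ (i.e. if $L$ is the last entry then $\mathrm{flip}_n(L)=\pi$).
   Context: Fix integers $n\ge1$, $k\ge1$. A $k$-coloured permutation of $\{1,\dots,n\}$ is a sequence $\pi=p_1p_2\cdots p_n$ with $p_i=v_i^{c_i}$, where $v_1\cdots v_n$ is a permutation of $\{1,\dots,n\}$ and each $c_i\in\{0,\dots,k-1\}$; the set of these is $\mathbf{C}(n,k)$. A pre-perm is a prefix $p_1\cdots p_j$ ($1\le j\le n$) of some element of $\mathbf{C}(n,k)$. For $p=v^c$ and integer $s$, $p^{+s}=v^{(c+s)\bmod k}$; for $\mathbf{p}=p_1\cdots p_j$, $\mathbf{p}^{+s}=p_1^{+s}\cdots p_j^{+s}$. For $1\le i\le n$, $\mathrm{flip}_i(p_1\cdots p_n)=p_i^{+1}p_{i-1}^{+1}\cdots p_1^{+1}p_{i+1}\cdots p_n$. For a pre-perm $\mathbf{p}$ of length $j$, $\rho(\mathbf{p})=r_1\cdots r_m$ ($m=kj$) is the concatenation $\mathbf{p}^{+(k-1)}\mathbf{p}^{+(k-2)}\cdots\mathbf{p}^{+0}$ viewed circularly (indices mod $m$), and $\rho(\mathbf{p})_i=r_{i-j+1}\cdots r_{i-1}$ (length $j-1$, indices mod $m$). The list $\mathcal{C}(\mathbf{p})$: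 if $j=1$, $\mathcal{C}(p_1)=p_1^{+0},p_1^{+1},\dots,p_1^{+(k-1)}$; if $j\ge2$, $\mathcal{C}(\mathbf{p})$ is the concatenation for $i=m,m-1,\dots,1$ of the lists obtained from $\mathcal{C}(\rho(\mathbf{p})_i)$ by appending $r_i$ to every entry. *)

From mathcomp Require Import all_boot.
Set Implicit Arguments. Unset Strict Implicit. Unset Printing Implicit Defensive.

(* A coloured symbol v^c is the pair (v, c) : nat * nat. *)
Definition csym := (nat * nat)%type.

Definition is_cperm (n k : nat) (s : seq csym) : bool :=
  [&& size s == n, perm_eq (map fst s) (iota 1 n) & all (fun p => p.2 < k) s].

Definition cshift (k s : nat) (p : csym) : csym := (p.1, (p.2 + s) %% k).
Definition sshift (k s : nat) (w : seq csym) : seq csym := map (cshift k s) w.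

Definition flip (k i : nat) (w : seq csym) : seq csym :=
  rev (sshift k 1 (take i w)) ++ drop i w.

Definition rho (k : nat) (p : seq csym) : seq csym :=
  flatten [seq sshift k (k.-1 - t) p | t <- iota 0 k].

(* r_i (1-indexed, indices mod m) *)
Definition rho_at (k : nat) (p : seq csym) (i : nat) : csym :=
  let m := k * size p in nth (0, 0) (rho k p) ((i + m - 1) %% m).

(* rho(p)_i = r_{i-j+1} ... r_{i-1}, length j-1, indices mod m *)
Definition rho_sub (k : nat) (p : seq csym) (i : nat) : seq csym :=
  let j := size p in let m := k * j in
  [seq nth (0, 0) (rho k p) ((i + d + m - j) %% m) | d <- iota 0 j.-1].

Fixpoint Clist (k j : nat) (p : seq csym) : seq (seq csym) :=
  match j with
  | 0 => [::]
  | 1 => [seq [:: cshift k s (head (0, 0) p)] | s <- iota 0 k]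
  | j'.+1 =>
      flatten [seq map (fun q => rcons q (rho_at k p i)) (Clist k j' (rho_sub k p i))
              | i <- rev (iota 1 (k * j))]
  end.

Definition CC (k : nat) (p : seq csym) : seq (seq csym) := Clist k (size p) p.

From mathcomp Require Import all_boot zify.
Set Implicit Arguments. Unset Strict Implicit. Unset Printing Implicit Defensive.

(* We prove a statement about any pre-perm p of length J (distinct values,
   colours below k), by induction on J: C(p) lists every "arrangement" of p
   (same values, any colours below k) exactly once, consecutive entries
   differ by a flip, C(p) starts with p, and flip_J of its last entry is p.

   Write m = kJ and read rho(p) circularly.  Over one period the entries
   r_1..r_m enumerate each coloured symbol of p exactly once, and stepping
   back J positions raises the colour by one.  Hence rho(p)_i r_i and
   r_(i+1)^(+1) rho(p)_(i+1) are the same window of J consecutive entries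
   of rho(p).  C(p) is the concatenation of the blocks C(rho(p)_i) r_i for
   i = m..1; by induction each block is a Gray code starting at the window
   rho(p)_i r_i, and a full flip of the last entry of block i+1 yields the
   first entry of block i.  The first window is p, and so is the one that
   a full flip of the very last entry produces. *)


Lemma nth_flatten_iota (T : Type) (d : T) (f : nat -> seq T) (j K a x : nat) :
  (forall t, size (f t) = j) -> x < K * j ->
  nth d (flatten [seq f t | t <- iota a K]) x = nth d (f (a + x %/ j)) (x %% j).
Proof.
move=> size_f; elim: K a x => [|K IH] a x; first by rewrite mul0n.
move=> x_lt /=; have j_gt0 : 0 < j.
  by rewrite lt0n; apply: contraTneq x_lt => ->; rewrite muln0.
rewrite nth_cat size_f; case: ltnP => x_j.
  by rewrite divn_small // modn_small // addn0.
rewrite IH; last by move: x_lt; rewrite mulSn; lia.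
have x_eq : x = 1 * j + (x - j) by lia.
have -> : x %/ j = 1 + (x - j) %/ j by rewrite {1}x_eq divnMDl.
have -> : x %% j = (x - j) %% j by rewrite {1}x_eq modnMDl.
by rewrite addnA addn1.
Qed.

Lemma iota0_rcons (n : nat) : iota 0 n.+1 = rcons (iota 0 n) n.
Proof. by rewrite -addn1 iotaD add0n cats1. Qed.

Lemma iota0_cons (n : nat) : iota 0 n.+1 = 0 :: map succn (iota 0 n).
Proof. by rewrite /= -[1]/(1 + 0) iotaDl. Qed.

Section CircularReading.
Variables (k : nat) (p : seq csym).
Hypotheses (k_gt0 : 0 < k) (p_gt0 : 0 < size p).
Local Notation j := (size p).
Local Notation m := (k * size p).

(* rhoc x is the entry r_(x+1) of rho(p), read circularly (0-indexed). *)
Definition rhoc (x : nat) : csym := nth (0, 0) (rho k p) (x %% m).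

Lemma m_gt0 : 0 < m. Proof. by rewrite muln_gt0 k_gt0 p_gt0. Qed.

Lemma nth_rho (x : nat) : x < m ->
  nth (0, 0) (rho k p) x = cshift k (k.-1 - x %/ j) (nth (0, 0) p (x %% j)).
Proof.
move=> x_lt; rewrite /rho (@nth_flatten_iota _ _ _ j) //.
  by rewrite add0n /sshift (nth_map (0, 0)) // ltn_pmod.
by move=> t; rewrite size_map.
Qed.

Lemma rhocE (x : nat) :
  rhoc x = cshift k (k.-1 - (x %/ j) %% k) (nth (0, 0) p (x %% j)).
Proof.
rewrite /rhoc nth_rho ?ltn_pmod ?m_gt0 //.
by rewrite divn_modl ?dvdn_mull // mulnK // modn_dvdm // dvdn_mull.
Qed.

Lemma rhoc_fst (x : nat) : (rhoc x).1 = (nth (0, 0) p (x %% j)).1.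
Proof. by rewrite rhocE. Qed.

Lemma rhoc_col (x : nat) : (rhoc x).2 < k.
Proof. by rewrite rhocE /= ltn_pmod. Qed.

Lemma rhoc_periodic (x : nat) : rhoc (x + m) = rhoc x.
Proof. by rewrite /rhoc modnDr. Qed.

Lemma rhoc_shift (y : nat) : rhoc y = cshift k 1 (rhoc (y + j)).
Proof.
rewrite !rhocE /cshift /= modnDr; congr (_, _).
rewrite divnDr // divnn p_gt0 modnDml.
rewrite -[(y %/ j + true) %% k]modnDml.
have : (y %/ j) %% k < k by rewrite ltn_pmod.
move: ((y %/ j) %% k) => b b_lt.
case: (ltnP b.+1 k) => b_k.
  by rewrite (modn_small (m := b + true)); [congr (_ %% k) | ]; lia.
have -> : b + true = k by lia.
rewrite modnn subn0 -addnA (_ : k.-1 + 1 = k); last by lia.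
by rewrite modnDr (_ : k.-1 - b = 0) ?addn0; last by lia.
Qed.

Lemma rhoc_last_block (d : nat) : all (fun x => x.2 < k) p -> d < j ->
  rhoc (m - j + d) = nth (0, 0) p d.
Proof.
move=> cols d_lt; rewrite rhocE.
have -> : m - j + d = k.-1 * j + d by rewrite -[in m](prednK k_gt0) mulSn addKn.
rewrite divnMDl // divn_small // addn0 modn_small; last by lia.
rewrite modnMDl modn_small // subnn /cshift addn0 modn_small.
  by case: (nth _ _ _).
by move/allP: cols; apply; apply: mem_nth.
Qed.

Lemma rhoc_inj (x y : nat) : uniq (map fst p) -> x < m -> y < m ->
  rhoc x = rhoc y -> x = y.
Proof.
move=> uniq_p x_lt y_lt; rewrite /rhoc !modn_small // !nth_rho // /cshift.
case=> eq_fst eq_col.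
have eq_mod : x %% j = y %% j.
  apply/eqP; rewrite -(nth_uniq 0 _ _ uniq_p) ?size_map ?ltn_pmod //.
  by rewrite !(nth_map (0, 0)) ?ltn_pmod // eq_fst.
have eq_div : x %/ j = y %/ j.
  have : x %/ j < k by rewrite ltn_divLR.
  have : y %/ j < k by rewrite ltn_divLR.
  move: eq_col; rewrite eq_mod => /eqP; rewrite eqn_modDl.
  move: (x %/ j) (y %/ j) => a b.
  rewrite !modn_small; [move=> /eqP; lia | lia | lia].
by rewrite (divn_eq x j) (divn_eq y j) eq_div eq_mod.
Qed.

Lemma rhoc_surj (x : csym) : all (fun x => x.2 < k) p ->
  x.1 \in map fst p -> x.2 < k -> exists2 y, y < m & rhoc y = x.
Proof.
move=> cols /mapP [z z_in x_z] x_col.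
have z_col : z.2 < k by move/allP: cols; apply.
have r_lt : index z p < j by rewrite index_mem.
set a := (z.2 + k.-1 - x.2) %% k.
have a_lt : a < k by rewrite ltn_pmod.
exists (a * j + index z p).
  apply: (leq_trans (n := a.+1 * j)); first by rewrite mulSn [j + _]addnC ltn_add2l.
  by rewrite leq_mul2r a_lt orbT.
rewrite rhocE divnMDl // divn_small // addn0 modn_small // modnMDl modn_small //.
rewrite nth_index // /cshift [RHS]surjective_pairing -x_z; congr (_, _).
rewrite -[RHS](modn_small x_col); apply/eqP; rewrite -(eqn_modDr a).
rewrite (_ : z.2 + (k.-1 - a) + a = z.2 + k.-1); last by lia.
by rewrite /a modnDmr subnKC //; lia.
Qed.

Definition window (x0 : nat) : seq csym := [seq rhoc (x0 + d) | d <- iota 0 j].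

Lemma window_rcons (i : nat) :
  rcons (rho_sub k p i) (rho_at k p i) = window (i + m - j).
Proof.
have j_le : j <= m by rewrite leq_pmull.
rewrite /window -(prednK p_gt0) iota0_rcons map_rcons prednK //.
congr rcons; last by rewrite /rho_at -/(rhoc _); congr rhoc; lia.
by apply: eq_map => d; rewrite -/(rhoc _); congr rhoc; lia.
Qed.

Lemma window_cons (i : nat) :
  cshift k 1 (rho_at k p i.+1) :: rho_sub k p i.+1 = window (i + m - j).
Proof.
have j_le : j <= m by rewrite leq_pmull.
rewrite /window -(prednK p_gt0) iota0_cons /= -map_comp prednK //.
congr (_ :: _).
  rewrite /rho_at -/(rhoc _) [rhoc (_ + 0)]rhoc_shift.
  by congr (cshift _ _ (rhoc _)); lia.
by apply: eq_map => d; rewrite /= -/(rhoc _); congr rhoc; lia.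
Qed.

Lemma window_periodic (x : nat) : window (x + m) = window x.
Proof. by apply: eq_map => d; rewrite addnAC rhoc_periodic. Qed.

Lemma window_last_block : all (fun x => x.2 < k) p -> window (m - j) = p.
Proof.
move=> cols; rewrite /window -[RHS](mkseq_nth (0, 0)) /mkseq.
apply/eq_in_map => d; rewrite mem_iota add0n => /andP [_ d_lt].
exact: rhoc_last_block.
Qed.

Lemma window_fst (x0 : nat) : perm_eq (map fst (window x0)) (map fst p).
Proof.
set idx := map (fun d => (x0 + d) %% j) (iota 0 j).
have -> : map fst (window x0) = map (fun r => (nth (0, 0) p r).1) idx.
  by rewrite -!map_comp; apply: eq_map => d; rewrite /= rhoc_fst.
have -> : map fst p = map (fun r => (nth (0, 0) p r).1) (iota 0 j).
  by rewrite -{1}(mkseq_nth (0, 0) p) /mkseq -map_comp.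
apply: perm_map.
have uniq_idx : uniq idx.
  rewrite map_inj_in_uniq ?iota_uniq // => d1 d2.
  rewrite !mem_iota !add0n => /andP [_ d1_lt] /andP [_ d2_lt] /eqP.
  by rewrite eqn_modDl !modn_small // => /eqP.
have sub_idx : {subset idx <= iota 0 j}.
  by move=> r /mapP [d _ ->]; rewrite mem_iota add0n ltn_pmod.
apply: uniq_perm => //; first exact: iota_uniq.
by case: (uniq_min_size uniq_idx sub_idx); rewrite ?size_map.
Qed.

End CircularReading.

Section Blocks.
Variables (T : eqType) (F : nat -> seq T).

Definition blocks (N : nat) : seq T := flatten [seq F i | i <- rev (iota 1 N)].

Lemma blocksS (N : nat) : blocks N.+1 = F N.+1 ++ blocks N.
Proof. by rewrite /blocks -[N.+1]addn1 iotaD rev_cat /= addnC. Qed.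

Lemma mem_blocks (N : nat) (x : T) :
  x \in blocks N <-> exists2 i, 0 < i <= N & x \in F i.
Proof.
elim: N => [|N IH]; first by split=> //; case=> i; lia.
rewrite blocksS mem_cat; split.
  case/orP=> [x_in | /IH [i i_le x_in]]; first by exists N.+1 => //; lia.
  by exists i => //; lia.
case=> i i_le x_in; case: (ltnP i N.+1) => i_N.
  by apply/orP; right; apply/IH; exists i => //; lia.
by rewrite (_ : N.+1 = i) ?x_in //; lia.
Qed.

Lemma size_blocks (c N : nat) : (forall i, size (F i) = c) -> size (blocks N) = N * c.
Proof. by move=> size_F; elim: N => // N IH; rewrite blocksS size_cat IH size_F mulSn. Qed.

Lemma blocks_uniq (N : nat) : (forall i, 0 < i <= N -> uniq (F i)) ->
  (forall i i' x, 0 < i <= N -> 0 < i' <= N -> x \in F i -> x \in F i' -> i = i') ->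
  uniq (blocks N).
Proof.
elim: N => [|N IH] uniq_F disj_F //.
rewrite blocksS cat_uniq uniq_F ?IH //=; try lia.
- rewrite andbT; apply/hasPn => x /mem_blocks [i i_le x_in]; apply/negP => x_in'.
  by have := disj_F N.+1 i x; lia.
- by move=> i i_le; apply: uniq_F; lia.
- by move=> i i' x i_le i'_le; apply: disj_F; lia.
Qed.

Lemma blocks_chain (d : T) (e : rel T) (N : nat) :
  (forall i, 0 < i <= N.+1 -> F i != [::]) ->
  (forall i, 0 < i <= N.+1 -> sorted e (F i)) ->
  (forall i, 0 < i <= N -> e (last d (F i.+1)) (head d (F i))) ->
  [/\ sorted e (blocks N.+1), head d (blocks N.+1) = head d (F N.+1)
    & last d (blocks N.+1) = last d (F 1)].
Proof.
elim: N => [|N IH] F_ne F_sorted F_link.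
  by rewrite blocksS /blocks /= cats0; split => //; apply: F_sorted.
have [sorted_B head_B last_B] : [/\ sorted e (blocks N.+1),
    head d (blocks N.+1) = head d (F N.+1) & last d (blocks N.+1) = last d (F 1)].
  by apply: IH => i i_le; [apply: F_ne | apply: F_sorted | apply: F_link]; lia.
have [le1 le2 le3] : [/\ 0 < N.+1 <= N.+2, 0 < N.+2 <= N.+2 & 0 < N.+1 <= N.+1].
  by split; lia.
have B_ne : blocks N.+1 != [::] by rewrite blocksS; case: (F N.+1) (F_ne _ le1).
have := F_link _ le3; have := F_sorted _ le2; have := F_ne _ le2.
rewrite blocksS; case: (F N.+2) => [|a t] //= _ sorted_t link.
split=> //; last by rewrite last_cat -last_B; case: (blocks N.+1) B_ne.
rewrite cat_path sorted_t /=.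
by move: sorted_B head_B B_ne link; case: (blocks N.+1) => [|b u] //= -> <- _ ->.
Qed.

End Blocks.

Lemma flip_rcons (k t : nat) (a : seq csym) (r : csym) : t <= size a ->
  flip k t (rcons a r) = rcons (flip k t a) r.
Proof.
move=> t_le; rewrite /flip -cats1 takel_cat // cats1 drop_rcons //.
by rewrite -rcons_cat.
Qed.

Lemma flip_full (k : nat) (a : seq csym) (r : csym) :
  flip k (size a).+1 (rcons a r) = cshift k 1 r :: flip k (size a) a.
Proof.
rewrite /flip take_oversize ?size_rcons // drop_oversize ?size_rcons //.
by rewrite take_size drop_size !cats0 /sshift map_rcons rev_rcons.
Qed.

Definition admissible (k : nat) (p : seq csym) : bool :=
  uniq (map fst p) && all (fun x => x.2 < k) p.

Definition arrangement (k : nat) (p s : seq csym) : bool :=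
  perm_eq (map fst s) (map fst p) && all (fun x => x.2 < k) s.

Definition flip_step (k J : nat) (a b : seq csym) : bool :=
  has (fun t => b == flip k t a) (iota 1 J).

Definition gray_spec (k J : nat) (p : seq csym) (C : seq (seq csym)) : Prop :=
  [/\ uniq C, forall s, (s \in C) = arrangement k p s, size C = k ^ J * J`!,
      sorted (flip_step k J) C & head [::] C = p /\ flip k J (last [::] C) = p].

Lemma arrangement_size (k : nat) (p s : seq csym) : arrangement k p s -> size s = size p.
Proof. by case/andP=> /perm_size; rewrite !size_map. Qed.

Lemma flip_step_rcons (k J : nat) (a b : seq csym) (r : csym) : size a = J ->
  flip_step k J a b -> flip_step k J.+1 (rcons a r) (rcons b r).
Proof.
move=> size_a /hasP [t t_in /eqP ->]; apply/hasP; exists t.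
  by move: t_in; rewrite !mem_iota; lia.
by rewrite flip_rcons // size_a; move: t_in; rewrite mem_iota; lia.
Qed.

Lemma path_iota (r : rel nat) (a n : nat) : (forall b, r b b.+1) -> path r a (iota a.+1 n).
Proof. by move=> r_succ; elim: n a => //= n IH a; rewrite r_succ IH. Qed.

Lemma Clist1_spec (k : nat) (x : csym) : 0 < k -> x.2 < k ->
  gray_spec k 1 [:: x] (Clist k 1 [:: x]).
Proof.
move=> k_gt0 x_col.
have iota_k : iota 0 k = 0 :: iota 1 k.-1 by rewrite -{1}(prednK k_gt0).
have x_eq : cshift k 0 x = x by rewrite /cshift addn0 modn_small //; case: x x_col.
split.
- rewrite map_inj_in_uniq ?iota_uniq // => s1 s2.
  rewrite !mem_iota !add0n => /andP [_ s1_lt] /andP [_ s2_lt] [] /eqP.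
  by rewrite eqn_modDl !modn_small // => /eqP.
- move=> s; apply/idP/idP.
    by move=> /mapP [t _ ->]; rewrite /arrangement /= perm_refl /= andbT ltn_pmod.
  move=> arr_s; have := arrangement_size arr_s; case/andP: arr_s.
  case: s => [|z [|]] // perm_s; rewrite /= andbT => z_col _.
  have z_fst : z.1 = x.1.
    by have := perm_mem perm_s z.1; rewrite /= !inE eqxx => /esym /eqP.
  apply/mapP; exists ((z.2 + k - x.2) %% k); first by rewrite mem_iota add0n ltn_pmod.
  rewrite /cshift modnDmr subnKC; last by lia.
  by rewrite modnDr modn_small // -z_fst -surjective_pairing.
- by rewrite size_map size_iota expn1 muln1.
- rewrite sorted_map iota_k /=; apply: path_iota => b.
  rewrite /flip_step /= orbF /flip /= /cshift /= modnDml addnS addn1.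
  by apply/eqP.
- split; first by rewrite /= iota_k /= x_eq.
  rewrite /= (_ : iota 0 k = rcons (iota 0 k.-1) k.-1); last by rewrite -iota0_rcons prednK.
  rewrite map_rcons last_rcons /flip /= /cshift /= modnDml -addnA addn1 prednK //.
  by rewrite modnDr modn_small //; case: x x_col x_eq.
Qed.

Section InductiveStep.
Variables (k j : nat) (p : seq csym).
Hypotheses (k_gt0 : 0 < k) (size_p : size p = j.+2) (adm_p : admissible k p).
Hypothesis IH : forall q, size q = j.+1 -> admissible k q ->
  gray_spec k j.+1 q (Clist k j.+1 q).

Let p_gt0 : 0 < size p. Proof. by rewrite size_p. Qed.
Let uniq_p : uniq (map fst p). Proof. by case/andP: adm_p. Qed.
Let cols_p : all (fun x => x.2 < k) p. Proof. by case/andP: adm_p. Qed.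

Definition block (i : nat) : seq (seq csym) :=
  [seq rcons q (rho_at k p i) | q <- Clist k j.+1 (rho_sub k p i)].

Lemma Clist_blocks : Clist k j.+2 p = blocks block (k * j.+2).
Proof. by []. Qed.

Lemma rho_atE (i : nat) : 0 < i <= k * j.+2 -> rho_at k p i = rhoc k p i.-1.
Proof.
move=> i_bounds; rewrite /rho_at -/(rhoc k p _).
by rewrite (_ : i + k * size p - 1 = i.-1 + k * size p) ?rhoc_periodic // size_p; lia.
Qed.

Lemma size_rho_sub (i : nat) : size (rho_sub k p i) = j.+1.
Proof. by rewrite /rho_sub size_map size_iota size_p. Qed.

(* Windows of rho(p) are admissible, hence so is rho(p)_i, and r_i has a valid colour. *)
Lemma rho_sub_admissible (i : nat) : admissible k (rho_sub k p i) /\ (rho_at k p i).2 < k.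
Proof.
have : admissible k (window k p (i + k * size p - size p)).
  rewrite /admissible (perm_uniq (window_fst k_gt0 p_gt0 _)) uniq_p /=.
  by apply/allP => y /mapP [d _ ->]; apply: rhoc_col.
rewrite -(window_rcons k_gt0 p_gt0) /admissible map_rcons rcons_uniq all_rcons.
by case/andP=> /andP [_ ->] /andP [-> ->].
Qed.

Lemma spec_sub (i : nat) :
  gray_spec k j.+1 (rho_sub k p i) (Clist k j.+1 (rho_sub k p i)).
Proof. exact: IH (size_rho_sub i) (proj1 (rho_sub_admissible i)). Qed.

Lemma block_entry_size (i : nat) (q : seq csym) :
  q \in Clist k j.+1 (rho_sub k p i) -> size q = j.+1.
Proof.
have [_ mem_C _ _ _] := spec_sub i.
by rewrite mem_C => /arrangement_size ->; apply: size_rho_sub.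
Qed.

Lemma block_ne (i : nat) : Clist k j.+1 (rho_sub k p i) != [::].
Proof.
have [_ _ size_C _ _] := spec_sub i.
by rewrite -size_eq0 size_C -lt0n muln_gt0 expn_gt0 k_gt0 fact_gt0.
Qed.

Lemma head_block (i : nat) : head [::] (block i) = window k p (i + k * size p - size p).
Proof.
have [_ _ _ _ [head_C _]] := spec_sub i.
rewrite /block -(window_rcons k_gt0 p_gt0).
by case: (Clist _ _ _) (block_ne i) head_C => //= q t _ ->.
Qed.

Lemma flip_last_block (i : nat) :
  flip k j.+2 (last [::] (block i.+1)) = window k p (i + k * size p - size p).
Proof.
have [_ _ _ _ [_ flip_C]] := spec_sub i.+1.
rewrite /block -(window_cons k_gt0 p_gt0).
case: (Clist _ _ _) (block_ne i.+1) flip_C (@block_entry_size i.+1) => [|q t] // _.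
move=> flip_C size_q /=; rewrite (last_map (rcons^~ (rho_at k p i.+1))).
have size_last : size (last q t) = j.+1 by apply: size_q; apply: mem_last.
by rewrite -[in j.+2]size_last flip_full size_last flip_C.
Qed.

(* Blocks are duplicate-free, and disjoint because the r_i are distinct. *)
Lemma step_uniq : uniq (Clist k j.+2 p).
Proof.
rewrite Clist_blocks; apply: blocks_uniq => [i _ | i i' s i_bounds i'_bounds].
  have [uniq_C _ _ _ _] := spec_sub i.
  by rewrite map_inj_uniq //; apply: rcons_injl.
move=> /mapP [q _ ->] /mapP [q' _] /rcons_inj [_].
rewrite (rho_atE i_bounds) (rho_atE i'_bounds) => eq_r.
by have := rhoc_inj k_gt0 p_gt0 uniq_p _ _ eq_r; rewrite size_p; lia.
Qed.

(* An arrangement of p ending with the symbol r_i lies exactly in block i. *)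
Lemma step_mem (s : seq csym) : (s \in Clist k j.+2 p) = arrangement k p s.
Proof.
rewrite Clist_blocks; apply/idP/idP.
  move/mem_blocks => [i _ /mapP [q q_in ->]].
  have [_ mem_C _ _ _] := spec_sub i; have [_ col_i] := rho_sub_admissible i.
  move: q_in; rewrite mem_C => /andP [perm_q cols_q].
  rewrite /arrangement all_rcons col_i cols_q !andbT.
  apply: perm_trans (window_fst k_gt0 p_gt0 (i + k * size p - size p)).
  rewrite -(window_rcons k_gt0 p_gt0) !map_rcons perm_rcons perm_sym perm_rcons.
  by rewrite perm_cons perm_sym.
move=> arr_s; have := arrangement_size arr_s; rewrite size_p; case/andP: arr_s.
case/lastP: s => [|q x] // perm_s; rewrite all_rcons => /andP [x_col cols_q] _.
have x_fst : x.1 \in map fst p by rewrite -(perm_mem perm_s) map_rcons mem_rcons mem_head.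
have [y y_lt rhoc_y] := rhoc_surj k_gt0 p_gt0 cols_p x_fst x_col.
have y_bounds : 0 < y.+1 <= k * j.+2 by rewrite -size_p; lia.
have r_eq : rho_at k p y.+1 = x by rewrite (rho_atE y_bounds) rhoc_y.
apply/mem_blocks; exists y.+1 => //; apply/mapP; exists q; last by rewrite r_eq.
have [_ mem_C _ _ _] := spec_sub y.+1.
rewrite mem_C /arrangement cols_q andbT.
have := window_fst k_gt0 p_gt0 (y.+1 + k * size p - size p).
rewrite -(window_rcons k_gt0 p_gt0) r_eq map_rcons perm_rcons.
move: perm_s; rewrite map_rcons perm_rcons => perm_s perm_w.
by rewrite -(perm_cons x.1); apply: perm_trans perm_s _; rewrite perm_sym.
Qed.

(* m = kJ blocks of size k^(J-1) (J-1)! each. *)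
Lemma step_size : size (Clist k j.+2 p) = k ^ j.+2 * j.+2`!.
Proof.
rewrite Clist_blocks (@size_blocks _ _ (k ^ j.+1 * j.+1`!)).
  by rewrite [k ^ j.+2]expnS [j.+2`!]factS -!mulnA; congr (k * _); rewrite mulnCA.
by move=> i; rewrite size_map; have [] := spec_sub i.
Qed.

(* The blocks chain together by full flips, from window(m-J) = p back to p. *)
Lemma step_chain : sorted (flip_step k j.+2) (Clist k j.+2 p) /\
  head [::] (Clist k j.+2 p) = p /\ flip k j.+2 (last [::] (Clist k j.+2 p)) = p.
Proof.
have m_eq : k * j.+2 = (k * j.+2).-1.+1 by rewrite prednK // muln_gt0 k_gt0.
have [|i _|i _|] := @blocks_chain _ block [::] (flip_step k j.+2) (k * j.+2).-1.
- by move=> i _; rewrite -size_eq0 size_map size_eq0; apply: block_ne.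
- have [_ _ _ sorted_C _] := spec_sub i.
  rewrite /block sorted_map; apply: (sub_in_sorted (P := fun q => size q == j.+1)) sorted_C.
    by move=> a b /eqP size_a _; apply: flip_step_rcons.
  by apply/allP => q /block_entry_size ->.
- apply/hasP; exists j.+2; first by rewrite mem_iota; lia.
  by rewrite flip_last_block head_block.
rewrite -m_eq -Clist_blocks => sorted_C -> ->; split=> //.
have last_p : window k p (k * size p - size p) = p by apply: window_last_block.
rewrite head_block flip_last_block add0n last_p.
rewrite (_ : k * j.+2 + k * size p - size p = k * size p - size p + k * size p).
  by rewrite window_periodic last_p.
by rewrite size_p; have := leq_pmull j.+2 k_gt0; lia.
Qed.

Lemma Clist_step : gray_spec k j.+2 p (Clist k j.+2 p).
Proof.
have [sorted_C head_last] := step_chain.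
by split; [apply: step_uniq | apply: step_mem | apply: step_size | |].
Qed.

End InductiveStep.

Lemma Clist_spec (k j : nat) (p : seq csym) : 0 < k -> size p = j.+1 ->
  admissible k p -> gray_spec k j.+1 p (Clist k j.+1 p).
Proof.
move=> k_gt0; elim: j p => [|j IH] p size_p adm_p.
  case: p size_p adm_p => [|x [|]] // _; rewrite /admissible /= andbT => x_col.
  exact: Clist1_spec.
exact: Clist_step.
Qed.

Lemma cperm_arrangement (n k : nat) (pi s : seq csym) : is_cperm n k pi ->
  is_cperm n k s <-> arrangement k pi s.
Proof.
case/and3P=> _ perm_pi _; rewrite /is_cperm /arrangement; split.
  by case/and3P=> _ perm_s ->; rewrite andbT (perm_trans perm_s) // perm_sym.
case/andP=> perm_s ->; have perm_s' := perm_trans perm_s perm_pi.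
by rewrite perm_s' !andbT -(size_iota 1 n) -(perm_size perm_s') size_map.
Qed.

Lemma sorted_flip_step_nth (k J : nat) (C : seq (seq csym)) :
  sorted (flip_step k J) C -> forall i, i.+1 < size C ->
  exists2 t, 1 <= t <= J & nth [::] C i.+1 = flip k t (nth [::] C i).
Proof.
case: C => [|x t] //= /(pathP [::]) step i i_lt.
have /hasP [u u_in /eqP ->] := step i i_lt.
by exists u => //; move: u_in; rewrite mem_iota; lia.
Qed.

Theorem theorem3 (n k : nat) (pi : seq csym) :
  1 <= n -> 1 <= k -> is_cperm n k pi ->
  let L := CC k pi in
  [/\ uniq L,
      (forall s, is_cperm n k s <-> s \in L),
      size L = k ^ n * n`!,
      (forall i, i.+1 < size L ->
         exists2 t, 1 <= t <= n & nth [::] L i.+1 = flip k t (nth [::] L i))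
    & head [::] L = pi /\ flip k n (last [::] L) = pi].
Proof.
case: n => [|j] // _ k_gt0 pi_cperm L.
have /and3P [/eqP size_pi perm_pi cols_pi] := pi_cperm.
have adm_pi : admissible k pi by rewrite /admissible (perm_uniq perm_pi) iota_uniq.
have [uniq_L mem_L size_L sorted_L ends_L] := Clist_spec k_gt0 size_pi adm_pi.
rewrite /L /CC size_pi; split=> //.
- by move=> s; rewrite mem_L; apply: cperm_arrangement.
- exact: sorted_flip_step_nth.
Qed.
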